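(* Let $n\ge3$, $I$ a finite nonempty set, $G=\mathrm{H}_n^{(I)}$ with projections $\pi_i\colon G\to\mathrm{H}_n$, and $H\le G$. If $HM(G)=G$ and $\pi_i(H)=\mathrm{H}_n$ for all $i\in I$, then $H=G$.
   Context: $M(G)$ is the intersection of all maximal normal subgroups of a finite group $G$. $V=\mathbb{F}_2^n$, $\mathrm{H}_n=V\rtimes S_n$ with $S_n$ permuting coordinates; total sign $\chi(x\tau)=(-1)^{\sum_ix_i}$; $\mathrm{H}_n^{(I)}=\{(g_i)_{i\in I}\in\mathrm{H}_n^I:\chi(g_i)=\chi(g_j)\ \forall i,j\in I\}$. *)

From HB Require Import structures.
From mathcomp Require Import all_boot all_order all_fingroup all_solvable.
Set Implicit Arguments. Unset Strict Implicit. Unset Printing Implicit Defensive.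
Local Open Scope group_scope.

(* Hyperoctahedral group H_n = F_2^n >< S_n realised as the group of signed
   permutations: permutations of 'I_n * bool commuting with the sign flip. *)
Definition flip n (x : 'I_n * bool) : 'I_n * bool := (x.1, ~~ x.2).

Definition Hn (n : nat) : {set {perm ('I_n * bool)}} :=
  [set g : {perm ('I_n * bool)} | [forall x, g (flip x) == flip (g x)]].

(* total sign chi(x tau) = (-1)^(sum_i x_i): parity of the number of
   coordinates whose sign is flipped (true = odd = -1). *)
Definition tsign n (f : 'I_n * bool -> 'I_n * bool) : bool :=
  odd #|[set k : 'I_n | (f (k, false)).2]|.

Definition proj (I : finType) n (i : I) (g : {perm (I * ('I_n * bool))})
  : 'I_n * bool -> 'I_n * bool := fun x => (g (i, x)).2.

(* H_n^(I): tuples (g_i)_{i in I} in H_n^I with all chi(g_i) equal, realised as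
   fibre-preserving permutations of I x ('I_n * bool) (g (i,x) = (i, g_i x)). *)
Definition HnI (I : finType) (n : nat) : {set {perm (I * ('I_n * bool))}} :=
  [set g : {perm (I * ('I_n * bool))} | [forall i, forall x, (g (i, x)).1 == i]
        && [forall i, forall x, proj i g (flip x) == flip (proj i g x)]
        && [forall i, forall j, tsign (proj i g) == tsign (proj j g)]].

Definition piH (I : finType) n (i : I) (H : {set {perm (I * ('I_n * bool))}})
  : {set {perm ('I_n * bool)}} :=
  [set h : {perm ('I_n * bool)} | [exists g in H, [forall x, proj i g x == h x]]].

Definition Mset (gT : finGroupType) (G : {set gT}) : {set gT} :=
  G :&: \bigcap_(N : {group gT} | maxnormal N G G) N.

(* By induction on J, every g in G = H_n^(I) agrees on the coordinates in J
   with some h in H; for J = I this gives g = h.  Adding a coordinate i to a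
   nonempty J: let B be the subgroup of elements of H trivial on J.  If all of
   B had even permutation part at i, then g |-> par_i(h) + par_i(g), with h in H
   agreeing with g on J, would be a well-defined morphism G -> Z/2 vanishing on
   H but not on a transposition at coordinate i; its kernel would be a maximal
   normal subgroup containing H and M(G), contradicting HM(G) = G.  So pi_i(B)
   is a normal subgroup of pi_i(H) = H_n, contained in D_n = ker chi (its
   elements have the total sign of their trivial J-coordinates) and containing
   an element with odd permutation part.  For n >= 3 this forces pi_i(B) = D_n:
   commutators with a sign flip give all double flips, hence all even flip
   sets, and the permutation parts then form a normal subgroup of S_n with an
   odd element, i.e. all of S_n.  Correcting h at i by an element of B then
   extends the agreement to i. *)

From HB Require Import structures.
From mathcomp Require Import all_boot all_order all_fingroup all_solvable.
Set Implicit Arguments. Unset Strict Implicit. Unset Printing Implicit Defensive.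
Local Open Scope group_scope.

Section PermOrId.
Variable T : finType.

Definition inj_or_id (f : T -> T) : T -> T := if injectiveb f then f else id.

Lemma inj_or_id_inj f : injective (inj_or_id f).
Proof. by rewrite /inj_or_id; case: injectiveP => // _ x y. Qed.

Definition perm_or_id f : {perm T} := perm (@inj_or_id_inj f).

Lemma perm_or_idE f : injective f -> perm_or_id f =1 f.
Proof. by move=> injf x; rewrite permE /inj_or_id; case: injectiveP. Qed.

End PermOrId.

Section SymmetricGroup.
Variable T : finType.
Implicit Types (x y z u v : T) (r s : {perm T}).

Lemma perm_map_uniq (s t : seq T) :
  uniq s -> uniq t -> size s = size t -> exists r : {perm T}, map r s = t.
Proof.
move=> us ut st; have sT : size s <= #|T| by rewrite -(card_uniqP us) max_card.
have inT m (w : m.-tuple T) : w \subset [set: T] by apply/subsetP=> x; rewrite inE.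
have /atransP2 := ntransitive_weak sT (Sym_trans T).
move=> /(_ (in_tuple s) (Tuple (introT eqP (esym st)))).
rewrite !inE us ut /= => /(_ (inT _ _) (inT _ _)) [r _ /(congr1 val) /= ->].
by exists r.
Qed.

Definition cyc3 x y z := tperm x y * tperm y z.

Lemma cyc3J x y z r : cyc3 x y z ^ r = cyc3 (r x) (r y) (r z).
Proof. by rewrite conjMg !tpermJ. Qed.

Lemma tperm_fix x y z : z != x -> z != y -> tperm x y z = z.
Proof. by move=> zx zy; rewrite tpermD // eq_sym. Qed.

Lemma tperm_commute x y u v : x != u -> x != v -> y != u -> y != v ->
  tperm x y * tperm u v = tperm u v * tperm x y.
Proof.
move=> xu xv yu yv; apply/permP=> w; rewrite !permM.
by do ! case: tpermP => //; move=> *; subst; rewrite ?eqxx in xu xv yu yv.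
Qed.

Lemma exists_notin (w : seq T) : size w < #|T| -> exists x, x \notin w.
Proof.
move=> ltwT; have /subsetPn[x _ xw] : ~~ (T \subset w); last by exists x.
apply: contraTN ltwT => /subset_leq_card leTw.
by rewrite -leqNgt (leq_trans leTw) ?card_size.
Qed.

Section NormalSubgroup.
Variable P : {group {perm T}}.
Hypothesis PJ : forall p r, p \in P -> p ^ r \in P.

Lemma tperm_commutator_mem s u v : s \in P -> tperm (s u) (s v) * tperm u v \in P.
Proof.
move=> Ps; have : s^-1 * s ^ tperm u v \in P by rewrite groupM ?groupV ?PJ.
have -> : s^-1 * s ^ tperm u v = (tperm u v)^-1 ^ s * tperm u v.
  by rewrite !conjgE !mulgA.
by rewrite tpermV tpermJ.
Qed.

Definition all_cyc3_in := forall x y z, uniq [:: x; y; z] -> cyc3 x y z \in P.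

Lemma all_cyc3_in_conj x y z : uniq [:: x; y; z] -> cyc3 x y z \in P -> all_cyc3_in.
Proof.
move=> uxyz Pc x' y' z' uxyz'.
have [r [<- <- <-]] := perm_map_uniq uxyz uxyz' (erefl _).
by rewrite -cyc3J PJ.
Qed.

Lemma double_tperm_cyc3 a b c d p :
  uniq [:: a; b; c; d; p] -> tperm a b * tperm c d \in P -> all_cyc3_in.
Proof.
rewrite /= !inE !negb_or -!andbA.
case/and5P=> _ ac ad ap /and5P[bc bd bp cd /and3P[cp dp _]] Pe.
apply: (@all_cyc3_in_conj d c p); first by rewrite /= !inE !negb_or eq_sym cd dp cp.
(* Times its conjugate by (d p), the element (a b)(c d) becomes (c d)(c p). *)
have := groupM Pe (PJ (tperm d p) Pe).
rewrite conjMg !tpermJ tpermL !(@tperm_fix d p) //.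
rewrite -mulgA [tperm c d * _]mulgA -tperm_commute // !mulgA tperm2 mul1g.
by rewrite tpermC.
Qed.

Lemma odd_normal_cyc3 s : 2 < #|T| -> s \in P -> odd_perm s -> all_cyc3_in.
Proof.
move=> T3 Ps odds; have inj := @perm_inj _ s.
have long x : s x != x -> s (s x) != x -> all_cyc3_in.
  move=> sx s2x; apply: (@all_cyc3_in_conj (s (s x)) (s x) x).
    by rewrite /= !inE !negb_or (inj_eq inj) sx s2x.
  by have := tperm_commutator_mem x (s x) Ps; rewrite tpermC [tperm x _]tpermC.
have [k sk] : exists k, s k != k.
  apply/existsP; apply: contraTT odds => /existsPn fix_s.
  suff -> : s = 1 by rewrite odd_perm1.
  by apply/permP=> x; rewrite perm1; apply/eqP/negPn.
have [s2k | ] := eqVneq (s (s k)) k; last exact: long.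
have [m] := @exists_notin [:: k; s k] T3; rewrite !inE negb_or => /andP[mk msk].
have [smm | smm] := eqVneq (s m) m.
  apply: (@all_cyc3_in_conj (s k) m k); first by rewrite /= !inE !negb_or eq_sym msk sk mk.
  by have := tperm_commutator_mem k m Ps; rewrite smm [tperm k m]tpermC.
have [s2m | ] := eqVneq (s (s m)) m; last exact: long.
(* Now s swaps k, s k and m, s m; a fifth point yields a 3-cycle through
   double_tperm_cyc3, and without one s would be even. *)
have smk : s m != k by rewrite -s2k (inj_eq inj).
have smsk : s m != s k by rewrite (inj_eq inj).
have [/existsP[p] | /existsPn no5] := boolP [exists p, p \notin [:: k; s k; m; s m]].
  rewrite !inE !negb_or => /and4P[pk psk pm psm].
  apply: (@double_tperm_cyc3 (s k) (s m) k m p _ (tperm_commutator_mem k m Ps)).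
  by rewrite /= !inE !negb_or -!andbA; do ![apply/andP; split] => //; rewrite eq_sym.
suff def_s : s = tperm k (s k) * tperm m (s m).
  by move: odds; rewrite def_s odd_permM !odd_tperm eq_sym sk eq_sym smm.
apply/permP=> x; rewrite permM; have := no5 x; rewrite negbK !inE.
case/or4P=> /eqP->.
- by rewrite tpermL tpermD.
- by rewrite s2k tpermR tpermD.
- by rewrite (@tperm_fix k) // tpermL.
- by rewrite s2m (@tperm_fix k) // tpermR.
Qed.

Section AllCycles.
Hypothesis cycP : all_cyc3_in.

Lemma tperm_pair_mem a b c d : a != b -> c != d -> tperm a b * tperm c d \in P.
Proof.
move=> ab cd.
have c3 x y z : x != y -> x != z -> y != z -> cyc3 x y z \in P.
  by move=> xy xz yz; apply: cycP; rewrite /= !inE !negb_or xy xz yz.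
have [ca | ca] := eqVneq c a.
  subst c; have [-> | db] := eqVneq d b; first by rewrite tperm2 group1.
  by rewrite tpermC; apply: c3; rewrite // eq_sym.
have [cb | cb] := eqVneq c b.
  subst c; have [-> | da] := eqVneq d a; first by rewrite tpermC tperm2 group1.
  by apply: c3; rewrite // eq_sym.
have [da | da] := eqVneq d a.
  by subst d; rewrite tpermC [tperm c a]tpermC; apply: c3; rewrite // eq_sym.
have [db | db] := eqVneq d b.
  by subst d; rewrite [tperm c b]tpermC; apply: c3; rewrite // eq_sym.
have -> : tperm a b * tperm c d = cyc3 a b c * cyc3 b c d.
  by rewrite /cyc3 mulgA -[tperm a b * tperm b c * tperm b c]mulgA tperm2 mulg1.
by rewrite groupM // c3 // eq_sym.
Qed.

Lemma even_tperm_prod_mem (ts : seq (T * T)) : all dpair ts ->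
  ~~ odd (size ts) -> \prod_(t <- ts) tperm t.1 t.2 \in P.
Proof.
have [m] := ubnP (size ts); elim: m ts => // m IH [|t1 [|t2 ts]] //=.
  by rewrite big_nil group1.
rewrite !ltnS negbK => sz /and3P[d1 d2 dts] ev.
by rewrite !big_cons mulgA groupM ?tperm_pair_mem // IH // ltnW.
Qed.

Lemma Alt_sub_normal : 'Alt_T \subset P.
Proof.
apply/subsetP=> r; rewrite Alt_even; have [ts -> dts] := prod_tpermP r.
by rewrite odd_perm_prod // => /(even_tperm_prod_mem dts).
Qed.

End AllCycles.

Theorem normal_Sym_odd s : 2 < #|T| -> s \in P -> odd_perm s -> P :=: 'Sym_T.
Proof.
move=> T3 Ps odds; apply/eqP; rewrite eqEsubset subsetT /=.
have /subsetP AltP := Alt_sub_normal (odd_normal_cyc3 T3 Ps odds).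
apply/subsetP=> r _; have [/AltP // | odd_r] := boolP (r \in 'Alt_T).
rewrite -(mulKVg s r) groupM // AltP // Alt_even odd_permM odd_permV odds.
by rewrite Alt_even negbK in odd_r; rewrite odd_r.
Qed.

End NormalSubgroup.
End SymmetricGroup.

Section MaximalNormal.
Variable gT : finGroupType.
Implicit Types G H N : {group gT}.

Lemma index2_maxnormal N G : N \subset G -> #|G : N| = 2 -> maxnormal N G G.
Proof.
move=> sNG iNG; have prNG : prime #|G : N| by rewrite iNG.
have /maxgroupP[pNG maxN] := p_index_maximal sNG prNG.
apply/maxgroupP; split; first by rewrite pNG normal_norm ?index2_normal.
by move=> X /andP[pXG _]; apply: maxN.
Qed.

Lemma Mset_sub_maxnormal N G : maxnormal N G G -> Mset G \subset N.
Proof.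
move=> maxN; apply: subset_trans (subsetIr _ _) _.
exact: (@bigcap_inf _ _ N (fun X : {group gT} => maxnormal X G G) (fun X => gval X) maxN).
Qed.

Lemma ker_bool_maxnormal G (f : {morphism G >-> bool}) x :
  x \in G -> f x -> maxnormal ('ker f) G G.
Proof.
move=> Gx fx; apply: index2_maxnormal; first exact: normal_sub (ker_normal f).
rewrite -[G in #|G : _|]setIid -card_morphim -[2]card_bool -cardsT.
apply: eq_card => b; rewrite inE; apply/morphimP.
by case: b; [exists x | exists 1; rewrite ?morph1].
Qed.

Lemma Mset_supplement_bool G H (f : {morphism G >-> bool}) :
  H * Mset G = G -> H \subset 'ker f -> {in G, forall x, f x = false}.
Proof.
move=> defG sHker x Gx; apply: negbTE; apply/negP=> fx.
have sMker := Mset_sub_maxnormal (ker_bool_maxnormal Gx fx).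
have /subsetP/(_ x) := mul_subG sHker sMker; rewrite defG => /(_ Gx)/mker.
by rewrite fx.
Qed.

End MaximalNormal.

Lemma odd_card_xor (T : finType) (A B : {set T}) :
  odd #|[set x | (x \in A) (+) (x \in B)]| = odd #|A| (+) odd #|B|.
Proof.
have <- : (A :|: B) :\: (A :&: B) = [set x | (x \in A) (+) (x \in B)].
  by apply/setP=> x; rewrite !inE; case: (x \in A); case: (x \in B).
have sIU : A :&: B \subset A :|: B := subset_trans (subsetIl A B) (subsetUl A B).
have := cardsID (A :&: B) (A :|: B); rewrite (setIidPr sIU).
move/(congr1 odd); rewrite oddD => oddU.
have := cardsUI A B; move/(congr1 odd); rewrite !oddD -oddU.
by rewrite addbC addbA addbb => <-.
Qed.

Section SignedPermutations.
Variable n : nat.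
Local Notation sp := {perm 'I_n * bool}.
Implicit Types (a b : sp) (p r : {perm 'I_n}) (S : {set 'I_n}).

Lemma HnP a : reflect (forall x, a (flip x) = flip (a x)) (a \in Hn n).
Proof. by rewrite inE; apply: (iffP forallP) => aflip x; apply/eqP. Qed.

Lemma Hn_group_set : group_set (Hn n).
Proof.
apply/group_setP; split; first by apply/HnP=> x; rewrite !perm1.
by move=> a b /HnP aflip /HnP bflip; apply/HnP=> x; rewrite !permM aflip bflip.
Qed.
Canonical Hn_group := Group Hn_group_set.

(* Writing a = x tau with x in F_2^n and tau in S_n, Hn_flips a is the support
   of x and Hn_perm a is tau (see Hn_decomp). *)
Definition Hn_flips a := [set k | (a (k, false)).2].
Definition Hn_perm a := perm_or_id (fun k => (a (k, false)).1).

Lemma tsignE a : tsign a = odd #|Hn_flips a|.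
Proof. by []. Qed.

Lemma HnE_fun a : a \in Hn n ->
  forall x, a x = ((a (x.1, false)).1, x.2 (+) (x.1 \in Hn_flips a)).
Proof.
move/HnP=> aflip [k [|]]; rewrite inE /=; last by case: (a (k, false)).
by rewrite -[(k, true)]/(flip (k, false)) aflip.
Qed.

Lemma Hn_permE a : a \in Hn n -> Hn_perm a =1 (fun k => (a (k, false)).1).
Proof.
move=> Ha; apply: perm_or_idE => k l ekl; have aE := HnE_fun Ha.
have : a (k, k \in Hn_flips a) = a (l, l \in Hn_flips a).
  by rewrite aE [in RHS]aE /= ekl !addbb.
by move/perm_inj => [].
Qed.

Lemma HnE a : a \in Hn n -> forall x, a x = (Hn_perm a x.1, x.2 (+) (x.1 \in Hn_flips a)).
Proof. by move=> Ha x; rewrite Hn_permE // HnE_fun. Qed.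

Lemma Hn_permM : {in Hn n &, {morph Hn_perm : a b / a * b}}.
Proof.
move=> a b Ha Hb; apply/permP=> k.
by rewrite permM (Hn_permE (groupM Ha Hb)) permM (HnE Ha) /= (HnE Hb).
Qed.

Definition permHn_fun p (x : 'I_n * bool) := (p x.1, x.2).
Lemma permHn_inj p : injective (permHn_fun p).
Proof. by move=> [k b] [l c] [/perm_inj -> ->]. Qed.
Definition permHn p : sp := perm (@permHn_inj p).

Lemma permHnE p x : permHn p x = (p x.1, x.2). Proof. exact: permE. Qed.

Lemma permHnM p r : permHn (p * r) = permHn p * permHn r.
Proof. by apply/permP=> x; rewrite permM !permHnE permM. Qed.

Lemma permHn_Hn p : permHn p \in Hn n.
Proof. by apply/HnP=> x; rewrite !permHnE. Qed.

Lemma Hn_perm_permHn p : Hn_perm (permHn p) = p.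
Proof. by apply/permP=> k; rewrite Hn_permE ?permHn_Hn // permHnE. Qed.

Lemma Hn_flips_permHn p : Hn_flips (permHn p) = set0.
Proof. by apply/setP=> k; rewrite !inE permHnE. Qed.

Definition flipHn_fun S (x : 'I_n * bool) := (x.1, x.2 (+) (x.1 \in S)).
Lemma flipHn_inj S : injective (flipHn_fun S).
Proof. by move=> [k b] [l c] [/= <-] /addIb <-. Qed.
Definition flipHn S : sp := perm (@flipHn_inj S).

Lemma flipHnE S x : flipHn S x = (x.1, x.2 (+) (x.1 \in S)). Proof. exact: permE. Qed.

Lemma flipHn_Hn S : flipHn S \in Hn n.
Proof. by apply/HnP=> x; rewrite !flipHnE /flip /= addNb. Qed.

Lemma flipHnM S1 S2 : flipHn S1 * flipHn S2 = flipHn [set k | (k \in S1) (+) (k \in S2)].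
Proof. by apply/permP=> x; rewrite permM !flipHnE /= inE addbA. Qed.

Lemma flipHn0 : flipHn set0 = 1.
Proof. by apply/permP=> -[k b]; rewrite flipHnE perm1 inE addbF. Qed.

Lemma flipHnD1 S k : k \in S -> flipHn S = flipHn [set k] * flipHn (S :\ k).
Proof.
move=> Sk; rewrite flipHnM; congr flipHn; apply/setP=> l; rewrite !inE.
by have [-> | _] := eqVneq l k; rewrite ?Sk.
Qed.

Lemma Hn_decomp a : a \in Hn n -> a = flipHn (Hn_flips a) * permHn (Hn_perm a).
Proof. by move=> Ha; apply/permP=> x; rewrite permM flipHnE permHnE (HnE Ha). Qed.

Lemma flipHn1J a k : a \in Hn n -> flipHn [set k] ^ a = flipHn [set Hn_perm a k].
Proof.
move=> Ha; apply/permP=> x; rewrite -(permKV a x) permJ.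
rewrite flipHnE !(HnE Ha) flipHnE /= !inE (inj_eq perm_inj).
by rewrite -!addbA [(_ == k) (+) _]addbC.
Qed.

Lemma tsignM a b : a \in Hn n -> b \in Hn n -> tsign (a * b) = tsign a (+) tsign b.
Proof.
move=> Ha Hb; rewrite !tsignE -(card_preimset (Hn_flips b) (@perm_inj _ (Hn_perm a))).
rewrite -odd_card_xor; congr odd; apply: eq_card => k.
by rewrite [LHS]inE permM (HnE Ha) /= (HnE Hb) /= [RHS]inE [in X in _ = _ (+) X]inE.
Qed.

Lemma tsign1 : tsign (1 : sp) = false.
Proof.
by rewrite tsignE (_ : Hn_flips 1 = set0) ?cards0 //; apply/setP=> k; rewrite !inE perm1.
Qed.

Lemma flipHnV S : (flipHn S)^-1 = flipHn S.
Proof.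
apply/eqP; rewrite eq_invg_mul flipHnM -flipHn0; apply/eqP; congr flipHn.
by apply/setP=> k; rewrite !inE addbb.
Qed.

Definition Dn := [set a in Hn n | ~~ tsign a].

Canonical permHn_morphism := @Morphism _ _ [set: {perm 'I_n}] permHn (in2W permHnM).

Section NormalSubgroupHn.
Variable N : {group sp}.
Hypothesis NJ : forall x a, x \in N -> a \in Hn n -> x ^ a \in N.
Hypothesis sNDn : N \subset Dn.

Lemma mem_normal_Hn x : x \in N -> x \in Hn n.
Proof. by move/(subsetP sNDn); rewrite inE => /andP[]. Qed.

Lemma double_flip_mem a (p q : 'I_n) : a \in N -> Hn_perm a != 1 -> p != q ->
  flipHn [set p] * flipHn [set q] \in N.
Proof.
move=> Na a_nt pq; have Ha := mem_normal_Hn Na.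
have [k ak] : exists k, Hn_perm a k != k.
  apply/existsP; apply: contraNT a_nt => /existsPn a_fix.
  by apply/eqP/permP=> k; rewrite perm1; apply/eqP/negPn.
have : a^-1 * a ^ flipHn [set k] \in N by rewrite groupM ?groupV ?NJ ?flipHn_Hn.
have -> : a^-1 * a ^ flipHn [set k] = (flipHn [set k])^-1 ^ a * flipHn [set k].
  by rewrite !conjgE !mulgA.
rewrite flipHnV flipHn1J // => /NJ/(_ (permHn_Hn _)).
have uk : uniq [:: Hn_perm a k; k] by rewrite /= inE ak.
have upq : uniq [:: p; q] by rewrite /= inE pq.
have [r [<- <-]] := perm_map_uniq uk upq (erefl _).
by move/(_ r); rewrite conjMg !flipHn1J ?permHn_Hn // Hn_perm_permHn.
Qed.

Lemma even_flip_mem S :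
  (forall p q : 'I_n, p != q -> flipHn [set p] * flipHn [set q] \in N) ->
  ~~ odd #|S| -> flipHn S \in N.
Proof.
move=> dN; have [m] := ubnP #|S|; elim: m S => // m IH S ltSm evS.
have [-> | [p Sp]] := set_0Vmem S; first by rewrite flipHn0 group1.
have [q Spq] : exists q, q \in S :\ p.
  by apply/set0Pn; apply: contraNneq evS => S1; rewrite (cardsD1 p) Sp S1 cards0.
have qp : q != p by move: Spq; rewrite !inE => /andP[].
have cardS : #|S| = #|S :\ p :\ q|.+2 by rewrite (cardsD1 p) Sp (cardsD1 q (S :\ p)) Spq.
rewrite (flipHnD1 Sp) (flipHnD1 Spq) mulgA groupM ?dN 1?eq_sym // IH //.
  by rewrite -ltnS -ltnS -cardS ltnW.
by move: evS; rewrite cardS /= negbK.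
Qed.

Theorem normal_Hn_Dn a0 : 2 < n -> a0 \in N -> odd_perm (Hn_perm a0) -> N :=: Dn.
Proof.
move=> n3 Na0 odd_a0; have Ha0 := mem_normal_Hn Na0.
have a0_nt : Hn_perm a0 != 1 by apply: contraTneq odd_a0 => ->; rewrite odd_perm1.
have flipN S : ~~ odd #|S| -> flipHn S \in N.
  by apply: even_flip_mem => p q; apply: double_flip_mem Na0 a0_nt.
have PJ : forall p r, p \in permHn @*^-1 N -> p ^ r \in permHn @*^-1 N.
  move=> p r; rewrite !inE /= morphJ ?inE // => /NJ; apply; exact: permHn_Hn.
have Pa0 : Hn_perm a0 \in permHn @*^-1 N.
  rewrite !inE /=; have -> : permHn (Hn_perm a0) = (flipHn (Hn_flips a0))^-1 * a0.
    by rewrite [X in _ * X](Hn_decomp Ha0) mulKg.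
  rewrite groupM ?groupV // flipN //; rewrite -tsignE.
  by have /(subsetP sNDn) := Na0; rewrite inE => /andP[].
have n3' : 2 < #|'I_n| by rewrite card_ord.
have /setP allP := normal_Sym_odd PJ n3' Pa0 odd_a0.
apply/eqP; rewrite eqEsubset sNDn; apply/subsetP=> d; rewrite inE => /andP[Hd evd].
rewrite (Hn_decomp Hd) groupM ?flipN -?tsignE //.
by have := allP (Hn_perm d); rewrite !inE.
Qed.

End NormalSubgroupHn.

End SignedPermutations.

Section FibredPermutations.
Variables (I T : finType).
Local Notation gp := {perm I * T}.
Implicit Types (g h : gp) (i j : I).

Definition fibred := [set g : gp | [forall u, (g u).1 == u.1]].

Definition projp i g : {perm T} := perm_or_id (fun x => (g (i, x)).2).

Lemma fibredE g i x : g \in fibred -> g (i, x) = (i, (g (i, x)).2).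
Proof.
rewrite inE => /forallP/(_ (i, x))/eqP.
by case: (g (i, x)) => /= j y ->.
Qed.

Lemma projpE g i : g \in fibred -> projp i g =1 (fun x => (g (i, x)).2).
Proof.
move=> Fg; apply: perm_or_idE => x y exy.
by have /perm_inj[] : g (i, x) = g (i, y) by rewrite fibredE // [RHS]fibredE // exy.
Qed.

Lemma fibredP g : g \in fibred -> forall i x, g (i, x) = (i, projp i g x).
Proof. by move=> Fg i x; rewrite projpE // -fibredE. Qed.

Lemma fibred_group_set : group_set fibred.
Proof.
apply/group_setP; split; first by rewrite inE; apply/forallP=> u; rewrite perm1.
move=> g h Fg Fh; rewrite inE; apply/forallP=> -[i x].
by rewrite permM (fibredP Fg) (fibredP Fh).
Qed.
Canonical fibred_group := Group fibred_group_set.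

Lemma projpM i : {in fibred &, {morph projp i : g h / g * h}}.
Proof.
move=> g h Fg Fh; apply/permP=> x.
by rewrite permM !projpE ?groupM // permM (fibredP Fg) (fibredP Fh).
Qed.
Canonical projp_morphism i := Morphism (projpM i).

Lemma fibred_eq g h : g \in fibred -> h \in fibred ->
  (forall i, projp i g = projp i h) -> g = h.
Proof. by move=> Fg Fh egh; apply/permP=> -[i x]; rewrite !fibredP // egh. Qed.

Definition loc_fun i (a : {perm T}) (u : I * T) := if u.1 == i then (u.1, a u.2) else u.
Lemma loc_inj i a : injective (loc_fun i a).
Proof.
move=> [j x] [k y]; rewrite /loc_fun /=.
have [-> | ji] := eqVneq j i; have [-> | ki] := eqVneq k i => //=.
- by case=> /perm_inj ->.
- by case=> ek; rewrite ek eqxx in ki.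
- by case=> ej; rewrite ej eqxx in ji.
Qed.
Definition loc i a : gp := perm (@loc_inj i a).

Lemma loc_fibred i a : loc i a \in fibred.
Proof. by rewrite inE; apply/forallP=> -[j x]; rewrite permE /loc_fun; case: ifP. Qed.

Lemma projp_loc i a j : projp j (loc i a) = if j == i then a else 1.
Proof.
apply/permP=> x; rewrite projpE ?loc_fibred // permE /loc_fun /=.
by case: eqP; rewrite ?perm1.
Qed.

End FibredPermutations.

Section HyperoctahedralPower.
Variables (I : finType) (n : nat).
Local Notation gp := {perm I * ('I_n * bool)}.
Local Notation Fib := (fibred I ('I_n * bool)%type).
Implicit Types (g h : gp) (i j : I).

Lemma tsign_ext (f f' : 'I_n * bool -> 'I_n * bool) : f =1 f' -> tsign f = tsign f'.
Proof. by move=> ef; congr odd; apply: eq_card => k; rewrite !inE ef. Qed.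

Lemma HnIP g : reflect
  [/\ g \in Fib, forall i, projp i g \in Hn n
     & forall i j, tsign (projp i g) = tsign (projp j g)]
  (g \in HnI I n).
Proof.
rewrite [g \in HnI I n]inE; apply: (iffP idP); last move=> [Fg Hg tg].
  case/andP=> /andP[/forallP Fg /forallP Hg] /forallP tg.
  have Fg' : g \in Fib by rewrite inE; apply/forallP=> -[i x]; apply: (forallP (Fg i)).
  split=> // [i | i j].
    by apply/HnP=> x; rewrite !projpE //; apply/eqP/(forallP (Hg i)).
  by rewrite !(tsign_ext (projpE _ Fg')); apply/eqP/(forallP (tg i)).
rewrite -andbA; apply/and3P; split; apply/forallP=> i; apply/forallP.
- by move=> x; move: Fg; rewrite inE => /forallP/(_ (i, x)).
- by move=> x; have /HnP/(_ x) := Hg i; rewrite /proj !projpE // => ->.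
- move=> j; have tsignE k : tsign (proj k g) = tsign (projp k g).
    by apply: tsign_ext => x; rewrite projpE.
  by rewrite !tsignE (tg i j).
Qed.

Lemma HnI_group_set : group_set (HnI I n).
Proof.
apply/group_setP; split.
  by apply/HnIP; split=> [||i j]; rewrite ?group1 // => *; rewrite !morph1 ?group1.
move=> g h /HnIP[Fg Hg tg] /HnIP[Fh Hh th]; apply/HnIP; split=> [||i j].
- exact: groupM.
- by move=> i; rewrite morphM //= groupM.
- by rewrite !morphM //= !tsignM // (tg i j) (th i j).
Qed.
Canonical HnI_group := Group HnI_group_set.

Lemma HnI_fibred g : g \in HnI I n -> g \in Fib.
Proof. by case/HnIP. Qed.

Lemma projp_HnI i g : g \in HnI I n -> projp i g \in Hn n.
Proof. by case/HnIP. Qed.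

Lemma tsign_HnI i j g : g \in HnI I n -> tsign (projp i g) = tsign (projp j g).
Proof. by case/HnIP. Qed.

Lemma loc_HnI i a : a \in Dn n -> loc i a \in HnI I n.
Proof.
rewrite inE => /andP[Ha ta]; apply/HnIP; split=> [||j k]; first exact: loc_fibred.
  by move=> j; rewrite projp_loc; case: eqP; rewrite ?group1.
by rewrite !projp_loc; do 2!case: eqP; rewrite ?tsign1 ?(negbTE ta).
Qed.

Lemma piH_morphim i (H : {set gp}) : H \subset HnI I n -> piH i H = projp i @* H.
Proof.
move=> sHG; have sHF : H \subset Fib by apply/subsetP=> g /(subsetP sHG)/HnI_fibred.
rewrite morphimEsub //; apply/setP=> a; rewrite inE.
apply/exists_inP/imsetP=> -[g Hg ega]; exists g => //.
  by apply/permP=> x; rewrite projpE ?(subsetP sHF) //; apply/esym/eqP/(forallP ega).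
by rewrite ega; apply/forallP=> x; rewrite projpE ?(subsetP sHF).
Qed.

End HyperoctahedralPower.

Section Approximation.
Variables (n : nat) (I : finType) (H : {group {perm I * ('I_n * bool)}}).
Local Notation gp := {perm I * ('I_n * bool)}.
Local Notation G := (HnI_group I n).
Hypotheses (n3 : 2 < n) (sHG : H \subset HnI I n).
Hypotheses (HM : H * Mset (HnI I n) = HnI I n) (piHH : forall i, piH i H = Hn n).
Implicit Types (J : {set I}) (i j : I) (g h b : gp).

Definition agree J h g := [forall j in J, projp j h == projp j g].

Definition approx J := forall g, g \in G -> exists2 h, h \in H & agree J h g.

Lemma agreeP J h g : reflect {in J, forall j, projp j h = projp j g} (agree J h g).
Proof. by apply: (iffP forall_inP) => e j /e /eqP. Qed.

Lemma H_HnI h : h \in H -> h \in G. Proof. exact: subsetP. Qed.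

Definition par i g := odd_perm (Hn_perm (projp i g)).

Lemma parM i : {in G &, {morph par i : g h / g * h}}.
Proof.
move=> g h Gg Gh; rewrite /par morphM ?HnI_fibred //= Hn_permM ?projp_HnI //.
exact: odd_permM.
Qed.
Canonical par_morphism i := Morphism (parM i).

Section ParityDefect.
Variables (J : {set I}) (i : I).
Hypotheses (iJ : i \notin J) (CJ : approx J).
Hypothesis evenB : forall b, b \in H -> agree J b 1 -> par i b = false.

Definition rep g := odflt 1 [pick h in H | agree J h g].

Lemma rep_spec g : g \in G -> rep g \in H /\ agree J (rep g) g.
Proof.
move=> Gg; rewrite /rep; case: pickP => [h /andP[] // | none].
by have [h Hh ahg] := CJ Gg; have := none h; rewrite Hh ahg.
Qed.

Lemma par_rep g h : g \in G -> h \in H -> agree J h g -> par i h = par i (rep g).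
Proof.
move=> Gg Hh /agreeP ahg; have [Hr /agreeP arg] := rep_spec Gg.
have Hhr : h^-1 * rep g \in H by rewrite groupM ?groupV.
have : agree J (h^-1 * rep g) 1.
  apply/agreeP=> j Jj.
  by rewrite morph1 morphM ?morphV ?groupV ?HnI_fibred ?H_HnI //= ahg ?arg ?mulVg.
move/(evenB Hhr); rewrite morphM ?morphV ?groupV ?H_HnI //=.
move=> e; have {}e : par i h (+) par i (rep g) = false := e.
by rewrite -[LHS]addbF -e addbA addbb.
Qed.

Definition parity_defect g := par i (rep g) (+) par i g.

Lemma parity_defectM : {in G &, {morph parity_defect : x y / x * y}}.
Proof.
move=> x y Gx Gy; have [Hx ax] := rep_spec Gx; have [Hy ay] := rep_spec Gy.
have [Grx Gry] := (H_HnI Hx, H_HnI Hy).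
rewrite /parity_defect -(par_rep (groupM Gx Gy) (groupM Hx Hy)); last first.
  apply/agreeP=> j Jj.
  by rewrite !morphM ?HnI_fibred //= (agreeP _ _ _ ax) ?(agreeP _ _ _ ay).
rewrite !morphM //=.
by case: (par i (rep x)); case: (par i (rep y)); case: (par i x); case: (par i y).
Qed.

Lemma no_parity_defect : False.
Proof.
pose k0 := Ordinal (leq_trans (isT : 1 <= 3) n3).
pose k1 := Ordinal (leq_trans (isT : 2 <= 3) n3).
pose t := loc i (permHn (tperm k0 k1)).
have Gt : t \in G by apply: loc_HnI; rewrite inE permHn_Hn tsignE Hn_flips_permHn cards0.
have sHker : H \subset 'ker (Morphism parity_defectM).
  apply/subsetP=> h Hh; apply/kerP; first exact: H_HnI.
  by rewrite /= /parity_defect -(par_rep (H_HnI Hh) Hh) ?addbb //; apply/agreeP.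
have := Mset_supplement_bool HM sHker Gt; rewrite /= /parity_defect.
have [Hr art] := rep_spec Gt; rewrite evenB //.
  by rewrite /par projp_loc eqxx Hn_perm_permHn odd_tperm.
apply/agreeP=> j Jj; rewrite (agreeP _ _ _ art) // projp_loc morph1.
by case: eqP Jj iJ => // ->->.
Qed.

End ParityDefect.

Lemma exists_odd_fixing J i : i \notin J -> approx J ->
  exists2 b, b \in H & agree J b 1 && par i b.
Proof.
move=> iJ CJ.
have [/exists_inP // | /exists_inPn noB] := boolP [exists b in H, agree J b 1 && par i b].
by case: (no_parity_defect iJ CJ) => b Hb aJb; apply: negbTE; have := noB b Hb; rewrite aJb.
Qed.

Definition fixing J := (H :&: \bigcap_(j in J) 'ker (projp j))%G.

Lemma mem_fixing J b : (b \in fixing J) = (b \in H) && agree J b 1.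
Proof.
rewrite inE; apply: andb_id2l => /H_HnI/HnI_fibred Fb.
apply/bigcapP/agreeP=> [kb j Jj | ab j Jj]; first by rewrite morph1 (mker (kb j Jj)).
by apply/(kerP _ Fb); rewrite /= ab ?morph1.
Qed.

Lemma projp_fixing J i j0 : i \notin J -> j0 \in J -> approx J ->
  projp i @* fixing J :=: Dn n.
Proof.
move=> iJ Jj0 CJ; have [b0 Hb0 /andP[ab0 odd_b0]] := exists_odd_fixing iJ CJ.
apply: (normal_Hn_Dn _ _ n3 (a0 := projp i b0)) odd_b0.
- move=> _ a /morphimP[b Fb Bb ->]; rewrite -(piHH i) piH_morphim //.
  case/morphimP=> h Fh Hh ->; rewrite -morphJ //; apply: mem_morphim; first exact: groupJ.
  move: Bb; rewrite !mem_fixing => /andP[Hb /agreeP ab]; rewrite groupJ //=.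
  by apply/agreeP=> j Jj; rewrite morphJ //= ab // !morph1 conj1g.
- apply/subsetP=> _ /morphimP[b _ Bb ->].
  move: Bb; rewrite mem_fixing => /andP[/H_HnI Gb /agreeP ab].
  by rewrite inE projp_HnI //= (tsign_HnI i j0 Gb) ab // morph1 tsign1.
- by rewrite mem_morphim ?mem_fixing ?Hb0 ?ab0 // HnI_fibred ?H_HnI.
Qed.

Lemma approx_step J i : i \notin J -> approx J -> approx (i |: J).
Proof.
move=> iJ CJ g Gg; have [J0 | [j0 Jj0]] := set_0Vmem J.
  have : projp i g \in projp i @* H by rewrite -piH_morphim // piHH projp_HnI.
  case/morphimP=> h _ Hh egh; exists h => //.
  by apply/agreeP=> j; rewrite J0 setU0 inE => /eqP->.
have [h Hh /agreeP ahg] := CJ _ Gg; have Gh := H_HnI Hh.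
have [Fg Fh] := (HnI_fibred Gg, HnI_fibred Gh).
have : projp i (h^-1 * g) \in Dn n.
  rewrite inE projp_HnI ?groupM ?groupV //= (tsign_HnI i j0) ?groupM ?groupV //.
  by rewrite morphM ?morphV ?groupV //= ahg // mulVg tsign1.
rewrite -(projp_fixing iJ Jj0 CJ) => /morphimP[b Fb].
rewrite mem_fixing => /andP[Hb /agreeP ab] ebk.
exists (h * b); first exact: groupM.
apply/agreeP=> j /setU1P[-> | Jj]; rewrite morphM //=.
  by rewrite -ebk morphM ?morphV ?groupV //= mulKVg.
by rewrite ab // morph1 mulg1 ahg.
Qed.

Lemma approx0 : approx set0.
Proof. by move=> g _; exists 1; rewrite ?group1 //; apply/agreeP=> j; rewrite inE. Qed.

Lemma approx_all J : approx J.
Proof.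
have [m] := ubnP #|J|; elim: m J => // m IH J ltJm.
have [-> | [i Ji]] := set_0Vmem J; first exact: approx0.
rewrite -(setD1K Ji); apply: approx_step; first by rewrite !inE eqxx.
by apply: IH; rewrite (cardsD1 i J) Ji in ltJm.
Qed.

End Approximation.

Theorem mainTheorem16 (n : nat) (I : finType)
  (H : {group {perm (I * ('I_n * bool))}}) :
  2 < n -> 0 < #|I| ->
  H \subset HnI I n ->
  H * Mset (HnI I n) = HnI I n ->
  (forall i : I, piH i H = Hn n) ->
  H :=: HnI I n.
Proof.
move=> n3 _ sHG HM piHH; apply/eqP; rewrite eqEsubset sHG; apply/subsetP=> g Gg.
have [h Hh /agreeP ahg] := approx_all n3 sHG HM piHH [set: I] Gg.
suff -> : g = h by [].
apply: fibred_eq => [||j]; [exact: HnI_fibred | exact/HnI_fibred/(subsetP sHG) |].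
by rewrite ahg ?inE.
Qed.
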